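(* Fix integers $s,t\geq 2$ and a subset $W=\{w_1<w_2<\cdots<w_k\}$ of $\{s+1,\ldots,st\}$. Let $\Omega_{s,t}(W)$ be the collection of all sets of integers $I=\{i_1<i_2<\cdots<i_k\}$ satisfying $w_\ell-s+\ell\leq i_\ell\leq w_\ell-1$ for all $\ell\in[k]$, and let $\Lambda_{s,t}(W)$ be the set of all $321$-avoiding linear extensions of $K_{s,t}^\alpha$ whose right-to-left minima are precisely the elements of $[st]\setminus W$. For $I\in\Omega_{s,t}(W)$ let $\mu_W(I)=\mu_1\cdots\mu_{st}$ be the permutation of $[st]$ with $\mu_{i_\ell}=w_\ell$ for all $\ell\in[k]$ and with the elements of $[st]\setminus W$ placed in increasing order in the remaining positions. Then $I\mapsto\mu_W(I)$ is a well-defined injection $\Omega_{s,t}(W)\to\Lambda_{s,t}(W)$. If $t=2$, this map is a bijection.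
   Context: $K^\alpha_{s,t}$ is the poset on $[st]$ whose order is generated by the covering relations $i\lessdot i+1$ for $1\le i\le s-1$ and $i\lessdot i+s$ for $1\le i\le st-s$ (the comb $K_{s,t}$ with $\alpha$-labeling $e_{i,j}\mapsto (j-1)s+i$). A linear extension is a permutation of $[st]$ in which $x$ precedes $y$ whenever $x<y$ in the poset. An entry $\pi_i$ is a right-to-left minimum if $\pi_i<\pi_j$ for all $j>i$. *)

From mathcomp Require Import all_boot.
From Stdlib Require Import Relations.
Set Implicit Arguments. Unset Strict Implicit. Unset Printing Implicit Defensive.

(* Covering relations of K^alpha_{s,t} on [st] = {1,...,st}:
   i <. i+1 for 1 <= i <= s-1, and i <. i+s for 1 <= i <= st-s. *)
Definition comb_cover (s t : nat) (x y : nat) : Prop :=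
  (1 <= x <= s - 1 /\ y = x + 1) \/ (1 <= x <= s * t - s /\ y = x + s).

Definition comb_le (s t : nat) : nat -> nat -> Prop :=
  clos_refl_trans nat (comb_cover s t).

(* A permutation of [st] is a sequence (pi_1 ... pi_st), stored 0-indexed. *)
Definition is_perm_st (s t : nat) (pi : seq nat) : Prop :=
  perm_eq pi (iota 1 (s * t)).

Definition linear_ext (s t : nat) (pi : seq nat) : Prop :=
  is_perm_st s t pi /\
  forall x y, comb_le s t x y -> x <> y -> index x pi < index y pi.

Definition avoids321 (pi : seq nat) : Prop :=
  ~ exists i j k, [/\ i < j, j < k, k < size pi,
      nth 0 pi j < nth 0 pi i & nth 0 pi k < nth 0 pi j].

Definition rl_min (pi : seq nat) (x : nat) : Prop :=
  exists i, [/\ i < size pi, nth 0 pi i = x &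
    forall j, i < j -> j < size pi -> x < nth 0 pi j].

Definition Lambda (s t : nat) (w : seq nat) (pi : seq nat) : Prop :=
  [/\ linear_ext s t pi, avoids321 pi &
      forall x, rl_min pi x <-> (1 <= x <= s * t /\ x \notin w)].

(* Omega_{s,t}(W): sets I = {i_1 < ... < i_k} (as strictly increasing seqs)
   with w_l - s + l <= i_l <= w_l - 1 (l is 1-indexed; here l.+1). *)
Definition Omega (s t : nat) (w : seq nat) (I : seq nat) : Prop :=
  [/\ sorted ltn I, size I = size w &
      forall l, l < size w ->
        nth 0 w l - s + l.+1 <= nth 0 I l <= nth 0 w l - 1].

Definition mu (s t : nat) (w : seq nat) (I : seq nat) : seq nat :=
  let c := [seq x <- iota 1 (s * t) | x \notin w] in
  [seq (if p \in I then nth 0 w (index p I)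
        else nth 0 c (count (fun q => q \notin I) (iota 1 p.-1)))
   | p <- iota 1 (s * t)].

From mathcomp Require Import all_boot zify.
From Stdlib Require Import Relations.
Set Implicit Arguments. Unset Strict Implicit. Unset Printing Implicit Defensive.

(** The sequence [mu_W(I)] is a shuffle of two increasing sequences, [W] on
   the positions [I] and [[st] \ W] elsewhere, so it is a permutation avoiding
   321, and [I] is read off as the positions of the elements of [W]. Counting
   the values outside [W] below a given [w_l] shows that the upper bound
   [i_l <= w_l - 1] makes exactly the values outside [W] right-to-left minima
   and gives the covers [w_l <. w_l + s]; the lower bound gives the covers
   [w_l - s <. w_l]. Conversely, in a 321-avoiding permutation whose
   right-to-left minima are [[st] \ W], both the entries of [W] and the other
   entries appear in increasing order, so it is [mu_W] of the positions of [W];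
   for [t = 2] the comb relations [v < w_l] for [v <= w_l - s] and the
   right-to-left minimum condition put these positions in [Omega_{s,t}(W)]. *)

Definition increasing_in (P : pred nat) (u : seq nat) :=
  forall i j, i < j -> j < size u ->
    P (nth 0 u i) -> P (nth 0 u j) -> nth 0 u i < nth 0 u j.

Lemma sorted_increasing_in (u : seq nat) : sorted ltn u -> increasing_in predT u.
Proof.
move=> su i j ij ju _ _.
by apply: (sorted_ltn_nth ltn_trans) => //; rewrite inE // (ltn_trans ij ju).
Qed.

Lemma index_lt_increasing_in P (u : seq nat) x y : increasing_in P u ->
  x \in u -> y \in u -> P x -> P y -> x < y -> index x u < index y u.
Proof.
move=> inc xu yu Px Py xy; rewrite ltnNge leq_eqVlt; apply/negP => /orP[/eqP e | yx].
  by move: xy; rewrite -(nth_index 0 xu) -(nth_index 0 yu) e ltnn.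
have := inc _ _ yx; rewrite index_mem !nth_index // => /(_ xu Py Px).
by rewrite ltnNge (ltnW xy).
Qed.

Lemma sorted_ltn_index_lt (u : seq nat) x y :
  sorted ltn u -> x \in u -> y \in u -> x < y -> index x u < index y u.
Proof.
by move=> su xu yu; apply: index_lt_increasing_in (sorted_increasing_in su) xu yu isT isT.
Qed.

Lemma sorted_filter_increasing_in P (u : seq nat) :
  increasing_in P u -> sorted ltn (filter P u).
Proof.
elim: u => [//|a u IH] /= inc.
have {}IH : sorted ltn (filter P u).
  by apply: IH => i j ij ju; apply: (inc i.+1 j.+1).
case Pa : (P a) => //=; rewrite path_sortedE; last exact: ltn_trans.
rewrite IH andbT; apply/allP => y; rewrite mem_filter => /andP[Py yu].
have := inc 0 (index y u).+1 (ltn0Sn _); rewrite /= nth_index // ltnS index_mem.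
exact.
Qed.

Lemma avoids321_increasing_in P (u : seq nat) :
  increasing_in P u -> increasing_in (predC P) u -> avoids321 u.
Proof.
move=> incP incC [i [j [k [ij jk ku ji kj]]]].
have ju := ltn_trans jk ku; have ik := ltn_trans ij jk.
have lt_same a b : a < b -> b < size u ->
    P (nth 0 u a) = P (nth 0 u b) -> nth 0 u a < nth 0 u b.
  move=> ab bu; case Pa : (P (nth 0 u a)) => /esym Pb; first exact: incP.
  by apply: incC; rewrite //= ?Pa ?Pb.
have [eij | nij] := eqVneq (P (nth 0 u i)) (P (nth 0 u j)).
  by have := lt_same _ _ ij ju eij; rewrite ltnNge (ltnW ji).
have [ejk | njk] := eqVneq (P (nth 0 u j)) (P (nth 0 u k)).
  by have := lt_same _ _ jk ku ejk; rewrite ltnNge (ltnW kj).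
have eik : P (nth 0 u i) = P (nth 0 u k).
  by move: nij njk; case: (P (nth 0 u i)); case: (P (nth 0 u j)); case: (P _).
by have := lt_same _ _ ik ku eik; lia.
Qed.

Lemma eq_from_map_filter (T : eqType) (P : pred T) (u v : seq T) :
  map P u = map P v -> filter P u = filter P v ->
  filter (predC P) u = filter (predC P) v -> u = v.
Proof.
elim: u v => [|a u IH] [|b v] //= [Pab Puv].
case Pa : (P a); rewrite -Pab Pa /=.
- by move=> [-> eq1] eq2; congr cons; apply: IH.
- by move=> eq1 [-> eq2]; congr cons; apply: IH.
Qed.

Lemma eq_increasing_in P (u v : seq nat) : perm_eq u v -> map P u = map P v ->
  increasing_in P u -> increasing_in P v ->
  increasing_in (predC P) u -> increasing_in (predC P) v -> u = v.
Proof.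
move=> uv Puv incPu incPv incCu incCv.
have eq_filter Q : increasing_in Q u -> increasing_in Q v -> filter Q u = filter Q v.
  move=> Qu Qv; apply: (irr_sorted_eq ltn_trans ltnn);
    [exact: sorted_filter_increasing_in.. | exact/perm_mem/perm_filter].
exact: eq_from_map_filter Puv (eq_filter _ incPu incPv) (eq_filter _ incCu incCv).
Qed.

Lemma count_lt_nth (u : seq nat) j :
  sorted ltn u -> j < size u -> count (fun y => y < nth 0 u j) u = j.
Proof.
elim: u j => [//|a u IH] [|j] /= su ju.
- rewrite ltnn add0n; apply/eqP; rewrite -leqn0 leqNgt -has_count; apply/hasP.
  move=> [y yu ya]; have /allP/(_ y yu) := order_path_min ltn_trans su.
  by rewrite ltnNge (ltnW ya).
- have aj : a < nth 0 u j := @sorted_increasing_in (a :: u) su 0 j.+1 (ltn0Sn _) ju isT isT.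
  by rewrite aj IH ?(path_sorted su).
Qed.

Lemma leq_count_lt (u : seq nat) x y :
  x <= y -> count (fun z => z < x) u <= count (fun z => z < y) u.
Proof. by move=> xy; apply: sub_count => z /= zx; exact: leq_trans zx xy. Qed.

Lemma count_mem_iota (u : seq nat) a b : uniq u ->
  count (mem u) (iota a b) = count (fun y => a <= y < a + b) u.
Proof.
move=> uu; rewrite -!size_filter; apply: perm_size; apply: uniq_perm.
- exact/filter_uniq/iota_uniq.
- exact: filter_uniq.
by move=> y; rewrite !mem_filter mem_iota andbC.
Qed.

Lemma count_lt_nth_add (u : seq nat) l m : sorted ltn u -> l < size u ->
  count (fun z => z < nth 0 u l + m) u <= l + m.
Proof.
move=> su lu; set x := nth 0 u l.
have := count_predUI (fun z => z < x) (fun z => x <= z < x + m) u.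
rewrite (count_lt_nth su lu) (@eq_count _ _ (fun z => z < x + m)); last by move=> z /=; lia.
rewrite -count_mem_iota ?(sorted_uniq ltn_trans ltnn) //.
have := count_size (mem u) (iota x m); rewrite size_iota; lia.
Qed.

Lemma rl_min_nth (u : seq nat) i j : uniq u -> rl_min u (nth 0 u i) ->
  i < j -> j < size u -> nth 0 u i < nth 0 u j.
Proof.
move=> uu [k [ku ek later]] ij ju.
have ik : i = k by apply/eqP; rewrite -(nth_uniq 0 (ltn_trans ij ju) ku uu) ek.
by apply: later; rewrite -?ik.
Qed.

Lemma not_rl_min_nth (u : seq nat) i : uniq u -> i < size u ->
  ~ rl_min u (nth 0 u i) -> exists2 j, i < j < size u & nth 0 u j < nth 0 u i.
Proof.
move=> uu iu nrl.
have [/hasP [j] | /hasPn later] :=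
  boolP (has (fun j => (i < j) && (nth 0 u j < nth 0 u i)) (iota 0 (size u))).
  by rewrite mem_iota add0n => /andP[_ ju] /andP[ij lt]; exists j; rewrite ?ij.
case: nrl; exists i; split => // j ij ju.
have := later j; rewrite mem_iota add0n ju ij /= => /(_ isT).
rewrite -leqNgt leq_eqVlt nth_uniq // => /orP[/eqP ji | //].
by move: ij; rewrite ji ltnn.
Qed.

Definition compl_seq (s t : nat) (w : seq nat) := [seq x <- iota 1 (s * t) | x \notin w].

Definition outside (I : seq nat) (q : nat) := count (predC (mem I)) (iota 1 q).

Lemma compl_seq_sorted s t w : sorted ltn (compl_seq s t w).
Proof. exact/sorted_filter/iota_ltn_sorted/ltn_trans. Qed.

Lemma outside_addn I a b :
  outside I (a + b) = outside I a + count (predC (mem I)) (iota a.+1 b).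
Proof. by rewrite /outside iotaD count_cat add1n. Qed.

Lemma leq_outside I a b : a <= b -> outside I a <= outside I b.
Proof. by move=> ab; rewrite -(subnKC ab) outside_addn leq_addr. Qed.

Lemma ltn_outside I a b : a < b -> a.+1 \notin I -> outside I a < outside I b.
Proof.
move=> ab aI; have -> : b = a + (b - a.+1).+1 by lia.
by rewrite outside_addn /= aI add1n addnS ltnS leq_addr.
Qed.

Lemma size_mu s t w I : size (mu s t w I) = s * t.
Proof. by rewrite size_map size_iota. Qed.

(* Entry [q] of the sequence is the entry in position [q.+1] of the paper. *)
Lemma nth_mu s t w I q : q < s * t -> nth 0 (mu s t w I) q =
  if q.+1 \in I then nth 0 w (index q.+1 I) else nth 0 (compl_seq s t w) (outside I q).
Proof. by move=> qn; rewrite /mu (nth_map 0) ?size_iota // nth_iota. Qed.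

Section Merge.

Variables (s t : nat) (w I : seq nat).
Hypothesis w_sorted : sorted ltn w.
Hypothesis w_range : {in w, forall x, s < x <= s * t}.
Hypothesis I_Omega : Omega s t w I.

Local Notation n := (s * t).
Local Notation c := (compl_seq s t w).
Local Notation muI := (mu s t w I).

Lemma I_sorted : sorted ltn I. Proof. by case: I_Omega. Qed.

Lemma size_I : size I = size w. Proof. by case: I_Omega. Qed.

Lemma nth_I_bounds l : l < size w ->
  nth 0 w l - s + l.+1 <= nth 0 I l <= nth 0 w l - 1.
Proof. by case: I_Omega => _ _; apply. Qed.

Lemma index_I_lt (p : nat) : p \in I -> index p I < size w.
Proof. by rewrite -size_I index_mem. Qed.

Lemma I_range (p : nat) : p \in I -> 0 < p < n.
Proof.
move=> pI; have := nth_I_bounds (index_I_lt pI); rewrite nth_index //.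
have := w_range (mem_nth 0 (index_I_lt pI)); move: (nth 0 w _) => x; lia.
Qed.

Lemma filter_iota_w : [seq y <- iota 1 n | y \in w] = w.
Proof.
apply: (irr_sorted_eq ltn_trans ltnn) => //.
  exact/sorted_filter/iota_ltn_sorted/ltn_trans.
move=> y; rewrite mem_filter mem_iota; case yw: (y \in w) => //=; have := w_range yw; lia.
Qed.

Lemma perm_w_compl : perm_eq (w ++ c) (iota 1 n).
Proof. by rewrite -{1}filter_iota_w perm_filterC. Qed.

Lemma size_compl : size c = n - size w.
Proof. by rewrite -(size_iota 1 n) -(perm_size perm_w_compl) size_cat addKn. Qed.

Lemma count_lt_compl_add x : 0 < x <= n.+1 ->
  count (fun y => y < x) c + count (fun y => y < x) w = x.-1.
Proof.
move=> xr; rewrite addnC -count_cat; move/permP: perm_w_compl => ->.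
by rewrite -size_filter -{1}(prednK (_ : 0 < x)) ?(filter_iota_ltn 1) ?size_iota; lia.
Qed.

Lemma outside_eq q : outside I q = q - count (fun y => y <= q) I.
Proof.
have -> : count (fun y => y <= q) I = count (mem I) (iota 1 q).
  rewrite count_mem_iota ?(sorted_uniq ltn_trans ltnn I_sorted) //.
  by apply: eq_in_count => y /I_range; lia.
by have := count_predC (mem I) (iota 1 q); rewrite size_iota /outside; lia.
Qed.

Lemma outside_lt_size q : q < n -> q.+1 \notin I -> outside I q < size c.
Proof.
move=> qn qI; have -> : size c = outside I n.
  rewrite size_compl -size_I outside_eq -count_predT; congr (_ - _).
  by apply: eq_in_count => y /I_range /=; lia.
exact: ltn_outside qn qI.
Qed.

Lemma outside_nth_I l : l < size w -> outside I (nth 0 I l).-1 = (nth 0 I l).-1 - l.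
Proof.
move=> lw; have lI : l < size I by rewrite size_I.
have il := I_range (mem_nth 0 lI); rewrite outside_eq; congr (_ - _).
rewrite -[RHS](count_lt_nth I_sorted lI); apply: eq_count => y /=.
by move: (nth 0 I l) il => p; lia.
Qed.

Lemma mu_in_w q : q < n -> (nth 0 muI q \in w) = (q.+1 \in I).
Proof.
move=> qn; rewrite nth_mu //; case: ifP => qI; first by rewrite mem_nth ?index_I_lt.
have := mem_nth 0 (outside_lt_size qn (negbT qI)).
by rewrite mem_filter => /andP[/negbTE].
Qed.

Lemma mu_range q : q < n -> 0 < nth 0 muI q <= n.
Proof.
move=> qn; rewrite nth_mu //; case: ifP => qI.
  by have := w_range (mem_nth 0 (index_I_lt qI)); move: (nth 0 w _) => x; lia.
have := mem_nth 0 (outside_lt_size qn (negbT qI)).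
by rewrite mem_filter mem_iota => /andP[_]; move: (nth 0 c _) => x; lia.
Qed.

Lemma count_lt_compl_mu q : q < n -> q.+1 \notin I ->
  count (fun y => y < nth 0 muI q) c = outside I q.
Proof.
move=> qn qI; rewrite nth_mu // (negbTE qI).
by rewrite count_lt_nth ?compl_seq_sorted ?outside_lt_size.
Qed.

Lemma mu_lt_same_class a b : a < b -> b < n ->
  (a.+1 \in I) = (b.+1 \in I) -> nth 0 muI a < nth 0 muI b.
Proof.
move=> ab bn e; rewrite !nth_mu ?(ltn_trans ab) // -e; case: ifP => aI.
  have bI : b.+1 \in I by rewrite -e.
  apply: (sorted_increasing_in w_sorted) => //; last exact: index_I_lt.
  by apply: sorted_ltn_index_lt I_sorted aI bI _.
apply: (sorted_increasing_in (compl_seq_sorted s t w)) => //.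
  exact: ltn_outside ab (negbT aI).
by apply: outside_lt_size; rewrite -?e ?aI.
Qed.

Lemma mu_lt_after_compl a b : a < b -> b < n -> a.+1 \notin I ->
  nth 0 muI a < nth 0 muI b.
Proof.
move=> ab bn aI; case bI : (b.+1 \in I); last first.
  by apply: mu_lt_same_class; rewrite ?bI ?(negbTE aI).
set l := index b.+1 I; have lw : l < size w := index_I_lt bI.
have il : nth 0 I l = b.+1 by rewrite nth_index.
have wl := w_range (mem_nth 0 lw).
have bounds := nth_I_bounds lw; rewrite il in bounds.
have outside_b : outside I b = b - l by have := outside_nth_I lw; rewrite il.
have count_w := count_lt_compl_add (x := nth 0 w l).
rewrite (count_lt_nth w_sorted lw) in count_w.
(* [i_l <= w_l - 1]: fewer than [w_l - 1 - l] entries outside [W] precede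
   position [i_l], and [w_l - 1 - l] values outside [W] lie below [w_l]. *)
rewrite [nth 0 muI b]nth_mu // bI -/l ltnNge; apply/negP => /(leq_count_lt c).
rewrite count_lt_compl_mu ?(ltn_trans ab) //; have := ltn_outside ab aI.
by clearbody l; move: (nth 0 w l) wl bounds outside_b count_w => x; lia.
Qed.

Lemma mu_increasing_in_w : increasing_in (mem w) muI.
Proof.
move=> i j ij; rewrite size_mu => jn /=.
by rewrite !mu_in_w ?(ltn_trans ij) // => iI jI; apply: mu_lt_same_class; rewrite ?iI ?jI.
Qed.

Lemma mu_increasing_in_compl : increasing_in (predC (mem w)) muI.
Proof.
move=> i j ij; rewrite size_mu => jn /=.
rewrite !mu_in_w ?(ltn_trans ij) // => iI jI.
by apply: mu_lt_same_class; rewrite ?(negbTE iI) ?(negbTE jI).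
Qed.

Lemma mu_neq i j : i < j -> j < n -> nth 0 muI i != nth 0 muI j.
Proof.
move=> ij jn; have [same | diff] := eqVneq (i.+1 \in I) (j.+1 \in I).
  by rewrite neq_ltn mu_lt_same_class.
by apply: contraNneq diff => e; rewrite -mu_in_w ?(ltn_trans ij) // e mu_in_w.
Qed.

Lemma mu_uniq : uniq muI.
Proof.
apply/(uniqP 0) => a b; rewrite !inE size_mu => an bn e.
case: (ltngtP a b) => // ab; [move: (mu_neq ab bn) | move: (mu_neq ab an)].
all: by rewrite e eqxx.
Qed.

Lemma mu_perm : perm_eq muI (iota 1 n).
Proof.
apply: uniq_perm; [exact: mu_uniq | exact: iota_uniq | ].
have sub : {subset muI <= iota 1 n}.
  move=> x /(nthP 0) [q]; rewrite size_mu => qn <-.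
  by rewrite mem_iota; have := mu_range qn; move: (nth 0 muI q) => y; lia.
by have [] := uniq_min_size mu_uniq sub; rewrite ?size_iota ?size_mu.
Qed.

Lemma mem_mu x : (x \in muI) = (0 < x <= n).
Proof. by rewrite (perm_mem mu_perm) mem_iota; lia. Qed.

Lemma index_mu_nth_w l : l < size w -> index (nth 0 w l) muI = (nth 0 I l).-1.
Proof.
move=> lw; have lI : l < size I by rewrite size_I.
have iI := mem_nth 0 lI; have il := I_range iI.
have qn : (nth 0 I l).-1 < n by move: (nth 0 I l) il => p; lia.
have := nth_mu w I qn; rewrite prednK; last by case/andP: il.
rewrite iI index_uniq ?(sorted_uniq ltn_trans ltnn I_sorted) // => <-.
by rewrite index_uniq ?size_mu ?mu_uniq.
Qed.

Lemma mu_index_lt_same_class (x y : nat) : 0 < x -> y <= n -> x < y ->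
  (x \in w) = (y \in w) -> index x muI < index y muI.
Proof.
move=> x0 yn xy e; have xm : x \in muI by rewrite mem_mu; lia.
have ym : y \in muI by rewrite mem_mu; lia.
case xw : (x \in w); rewrite xw in e.
  exact: index_lt_increasing_in mu_increasing_in_w xm ym xw (esym e) xy.
by apply: index_lt_increasing_in mu_increasing_in_compl xm ym _ _ xy; rewrite /= ?xw -?e.
Qed.

Lemma mu_index_lt_w_compl (x : nat) : x \in w -> x + s \notin w -> x + s <= n ->
  index x muI < index (x + s) muI.
Proof.
move=> xw yw yn; set l := index x w; have lw : l < size w by rewrite index_mem.
have xl : nth 0 w l = x := nth_index 0 xw.
have xr := w_range xw.
have ym : x + s \in muI by rewrite mem_mu; lia.
set b := index (x + s) muI.
have bn : b < n by rewrite -(size_mu s t w I) index_mem.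
have bI : b.+1 \notin I by rewrite -mu_in_w // nth_index.
have count_b := count_lt_compl_mu bn bI; rewrite nth_index // in count_b.
have count_y := count_lt_compl_add (x := x + s).
have window := count_lt_nth_add s w_sorted lw; rewrite xl in window.
have lI : l < size I by rewrite size_I.
have il := I_range (mem_nth 0 lI).
have bounds := nth_I_bounds lw; rewrite xl in bounds.
rewrite -xl index_mu_nth_w // ltnNge; apply/negP => ba.
have {}ba : b < (nth 0 I l).-1.
  rewrite ltn_neqAle ba andbT; apply: contraNneq bI => ->.
  by rewrite prednK ?mem_nth //; case/andP: il.
have := ltn_outside ba bI; rewrite outside_nth_I //.
by clearbody l b; move: (nth 0 I l) il bounds => p; lia.
Qed.

Lemma mu_index_lt_compl_w (x : nat) : 0 < x -> x \notin w -> x + s \in w ->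
  index x muI < index (x + s) muI.
Proof.
move=> x0 xw yw; set l := index (x + s) w; have lw : l < size w by rewrite index_mem.
have yl : nth 0 w l = x + s := nth_index 0 yw.
have yr := w_range yw.
have xm : x \in muI by rewrite mem_mu; lia.
set a := index x muI.
have an : a < n by rewrite -(size_mu s t w I) index_mem.
have aI : a.+1 \notin I by rewrite -mu_in_w // nth_index.
have count_a := count_lt_compl_mu an aI; rewrite nth_index // in count_a.
have count_x := count_lt_compl_add (x := x).
have bounds := nth_I_bounds lw; rewrite yl in bounds.
rewrite -yl index_mu_nth_w // ltnNge; apply/negP => la.
have := leq_outside I la; rewrite outside_nth_I //.
by clearbody l a; move: (nth 0 I l) bounds => p; lia.
Qed.

Lemma mu_index_lt_cover x y : 0 < t -> comb_cover s t x y -> index x muI < index y muI.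
Proof.
move=> t0 cover; have sn := leq_pmulr s t0.
have notin_w z : z <= s -> z \notin w by move=> zs; apply/negP => /w_range; lia.
case: cover => [[xr ->] | [xr ->]].
  have [xw yw] : x \notin w /\ x + 1 \notin w by split; apply: notin_w; lia.
  by apply: mu_index_lt_same_class; rewrite ?(negbTE xw) ?(negbTE yw) //; lia.
have [xw | xw] := boolP (x \in w); have [yw | yw] := boolP (x + s \in w).
- by apply: mu_index_lt_same_class; rewrite ?xw ?yw //; lia.
- by apply: mu_index_lt_w_compl; lia.
- by apply: mu_index_lt_compl_w; lia.
- by apply: mu_index_lt_same_class; rewrite ?(negbTE xw) ?(negbTE yw) //; lia.
Qed.

Lemma mu_linear_ext : 0 < t -> linear_ext s t muI.
Proof.
move=> t0; split=> [|x y]; first exact: mu_perm.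
suff: comb_le s t x y -> x = y \/ index x muI < index y muI by move=> h /h [].
elim=> [a b /(mu_index_lt_cover t0) | a | a b d _ [<- | ab] _ [<- | bd]];
  by [right | left | right | right | right; exact: ltn_trans ab bd].
Qed.

Lemma mu_rl_min_compl (x : nat) : 0 < x <= n -> x \notin w -> rl_min muI x.
Proof.
move=> xr xw; have xm : x \in muI by rewrite mem_mu.
have xn : index x muI < n by rewrite -(size_mu s t w I) index_mem.
exists (index x muI); split; rewrite ?nth_index ?size_mu // => j xj jn.
rewrite -{1}(nth_index 0 xm); apply: mu_lt_after_compl => //.
by rewrite -mu_in_w ?nth_index.
Qed.

Lemma mu_not_rl_min_w x : x \in w -> ~ rl_min muI x.
Proof.
move=> xw [i [iN ei later]]; rewrite size_mu in iN.
have xm : x \in muI by rewrite -ei mem_nth ?size_mu.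
set l := index x w; have lw : l < size w by rewrite index_mem.
have il : i = (nth 0 I l).-1.
  by rewrite -index_mu_nth_w // nth_index // -ei index_uniq ?size_mu ?mu_uniq.
have bounds := nth_I_bounds lw; rewrite nth_index // in bounds.
have xr := w_range xw.
have sub : {subset iota 1 x.-1 <= take i muI}.
  move=> y; rewrite mem_iota => yr; have ym : y \in muI by rewrite mem_mu; lia.
  rewrite in_take //; case: (ltngtP (index y muI) i) => // [iy | yi].
    by have := later _ iy; rewrite nth_index // index_mem => /(_ ym); lia.
  by move: ei; rewrite -yi nth_index //; lia.
have := uniq_leq_size (iota_uniq 1 x.-1) sub; rewrite size_iota size_take size_mu iN.
by clearbody l; lia.
Qed.

Lemma mu_rl_min x : rl_min muI x <-> 0 < x <= n /\ x \notin w.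
Proof.
split=> [xrl | [xr xw]]; last exact: mu_rl_min_compl.
have [i [iN ei _]] := xrl; rewrite size_mu in iN.
by split; [rewrite -ei mu_range | apply/negP => /mu_not_rl_min_w].
Qed.

Lemma mu_Lambda : 0 < t -> Lambda s t w muI.
Proof.
move=> t0; split=> [| | x]; [exact: mu_linear_ext | | exact: mu_rl_min].
exact: avoids321_increasing_in mu_increasing_in_w mu_increasing_in_compl.
Qed.

End Merge.

Lemma mu_inj s t w I1 I2 : sorted ltn w -> {in w, forall x, s < x <= s * t} ->
  Omega s t w I1 -> Omega s t w I2 -> mu s t w I1 = mu s t w I2 -> I1 = I2.
Proof.
move=> ws wr O1 O2 e; apply: (@eq_from_nth _ 0); first by rewrite (size_I O1) (size_I O2).
move=> l; rewrite (size_I O1) => lw.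
have l1 : l < size I1 by rewrite (size_I O1).
have l2 : l < size I2 by rewrite (size_I O2).
have := index_mu_nth_w ws wr O1 lw; rewrite e index_mu_nth_w //.
have := I_range ws wr O1 (mem_nth 0 l1); have := I_range ws wr O2 (mem_nth 0 l2).
by move: (nth 0 I1 l) (nth 0 I2 l) => p1 p2; lia.
Qed.

Lemma comb_le_chain s t v z : 0 < v -> v <= z -> z <= s -> comb_le s t v z.
Proof.
move=> v0; elim: z => [|z IH] vz zs; first by move: vz v0; lia.
case: (ltngtP v z.+1) vz => // [vz _ | -> _]; last exact: rt_refl.
apply: rt_trans (IH vz (ltnW zs)) _; apply: rt_step; left; split; first lia.
by rewrite addn1.
Qed.

Definition positions (w pi : seq nat) := [seq (index x pi).+1 | x <- w].

Section Lambda.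

Variables (s t : nat) (w pi : seq nat).
Hypothesis pi_Lambda : Lambda s t w pi.

Lemma Lambda_linear_ext : linear_ext s t pi. Proof. by case: pi_Lambda. Qed.

Lemma Lambda_uniq : uniq pi.
Proof. by case: Lambda_linear_ext => /perm_uniq ->; rewrite iota_uniq. Qed.

Lemma size_Lambda : size pi = s * t.
Proof. by case: Lambda_linear_ext => /perm_size ->; rewrite size_iota. Qed.

Lemma mem_Lambda (x : nat) : (x \in pi) = (0 < x <= s * t).
Proof. by case: Lambda_linear_ext => /perm_mem -> _; rewrite mem_iota; lia. Qed.

Lemma Lambda_rl_min_compl i : i < size pi -> nth 0 pi i \notin w -> rl_min pi (nth 0 pi i).
Proof. by move=> iu iw; case: pi_Lambda => _ _ ->; rewrite -mem_Lambda mem_nth. Qed.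

Lemma Lambda_not_rl_min_w (x : nat) : x \in w -> ~ rl_min pi x.
Proof. by move=> xw; case: pi_Lambda => _ _ -> [_]; rewrite xw. Qed.

Lemma Lambda_increasing_in_compl : increasing_in (predC (mem w)) pi.
Proof.
move=> i j ij ju /= iw _; apply: (rl_min_nth Lambda_uniq _ ij ju).
exact: Lambda_rl_min_compl (ltn_trans ij ju) iw.
Qed.

Lemma Lambda_increasing_in_w : increasing_in (mem w) pi.
Proof.
move=> i j ij ju /= _ jw; have iu := ltn_trans ij ju.
rewrite ltn_neqAle nth_uniq ?Lambda_uniq // (ltn_eqF ij) /= leqNgt; apply/negP => ji.
have [k /andP[jk ku] kj] := not_rl_min_nth Lambda_uniq ju (Lambda_not_rl_min_w jw).
by case: pi_Lambda => _ avoid _; apply: avoid; exists i, j, k.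
Qed.

Lemma Lambda_lt_w_after p q : q < p -> p < size pi -> nth 0 pi p \in w ->
  nth 0 pi q < nth 0 pi p.
Proof.
move=> qp pu pw; case qw : (nth 0 pi q \in w); first exact: Lambda_increasing_in_w.
apply: (rl_min_nth Lambda_uniq _ qp pu).
by apply: Lambda_rl_min_compl; rewrite ?qw ?(ltn_trans qp pu).
Qed.

Hypothesis w_sorted : sorted ltn w.
Hypothesis w_range : {in w, forall x, s < x <= s * t}.

Lemma w_sub_Lambda (x : nat) : x \in w -> x \in pi.
Proof. by move/w_range; rewrite mem_Lambda; lia. Qed.

Lemma index_w_upper (x : nat) : x \in w -> (index x pi).+2 <= x.
Proof.
move=> xw; have xpi := w_sub_Lambda xw.
have pu : index x pi < size pi by rewrite index_mem.
have px : nth 0 pi (index x pi) = x := nth_index 0 xpi.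
move: (index x pi) pu px => p pu px.
have pw : nth 0 pi p \in w by rewrite px.
have [j /andP[pj ju] jx] := not_rl_min_nth Lambda_uniq pu (Lambda_not_rl_min_w pw).
rewrite px in jx.
have sub : {subset nth 0 pi j :: take p pi <= iota 1 x.-1}.
  move=> y; rewrite inE mem_iota => /orP[/eqP -> | yt].
    by have := mem_nth 0 ju; rewrite mem_Lambda; move: jx; move: (nth 0 pi j) => a; lia.
  have ypi : y \in pi := mem_take yt.
  rewrite in_take // in yt; have := Lambda_lt_w_after yt pu pw.
  by rewrite nth_index // px; move: ypi; rewrite mem_Lambda; lia.
have uniq_sub : uniq (nth 0 pi j :: take p pi).
  rewrite /= take_uniq ?Lambda_uniq // andbT in_take ?mem_nth //.
  by rewrite index_uniq ?Lambda_uniq // -leqNgt (ltnW pj).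
by have := uniq_leq_size uniq_sub sub; rewrite /= size_takel ?(ltnW pu) // size_iota; lia.
Qed.

Lemma index_w_lower l : t = 2 -> l < size w -> nth 0 w l - s + l <= index (nth 0 w l) pi.
Proof.
move=> t2 lw; set x := nth 0 w l; have xw : x \in w := mem_nth 0 lw.
have xr := w_range xw; rewrite t2 in xr.
have xpi := w_sub_Lambda xw.
set V := iota 1 (x - s) ++ take l w.
have V_uniq : uniq V.
  rewrite cat_uniq iota_uniq take_uniq ?(sorted_uniq ltn_trans ltnn w_sorted) //= andbT.
  by apply/hasP => -[y /mem_take /w_range]; rewrite mem_iota t2; lia.
have sub : {subset V <= take (index x pi) pi}.
  move=> v; rewrite mem_cat => /orP[vi | vt].
    rewrite mem_iota in vi; have vpi : v \in pi by rewrite mem_Lambda t2; lia.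
    rewrite in_take //; case: Lambda_linear_ext => _; apply; last by lia.
    (* As [t = 2], [v <= x - s <= s] lie on the chain [1 < ... < s], and [x - s <. x]. *)
    apply: (rt_trans _ _ _ (x - s)); first by apply: comb_le_chain; lia.
    by apply: rt_step; right; rewrite t2; split; lia.
  have vw : v \in w := mem_take vt.
  rewrite in_take ?w_sub_Lambda //.
  apply: (index_lt_increasing_in Lambda_increasing_in_w) => //; first exact: w_sub_Lambda.
  rewrite in_take // in vt; rewrite -(nth_index 0 vw).
  by apply: (sorted_increasing_in w_sorted).
have xu : index x pi <= size pi by rewrite ltnW // index_mem.
have := uniq_leq_size V_uniq sub.
by rewrite size_cat size_iota (size_takel (ltnW lw)) (size_takel xu).
Qed.

Lemma positions_Omega : t = 2 -> Omega s t w (positions w pi).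
Proof.
move=> t2; split; [| by rewrite size_map | move=> l lw].
  apply: (homo_sorted_in _ (allss w) w_sorted) => x y xw yw xy /=; rewrite ltnS.
  by apply: (index_lt_increasing_in Lambda_increasing_in_w _ _ xw yw xy);
    exact: w_sub_Lambda.
rewrite (nth_map 0) //; have := index_w_upper (mem_nth 0 lw).
have := index_w_lower t2 lw; move: (nth 0 w l) => x.
by move: (index x pi) => p; lia.
Qed.

Lemma mem_positions q : q < size pi -> (q.+1 \in positions w pi) = (nth 0 pi q \in w).
Proof.
move=> qu; apply/mapP/idP => [[x xw [->]] | qw]; first by rewrite nth_index ?w_sub_Lambda.
by exists (nth 0 pi q); rewrite ?index_uniq ?Lambda_uniq.
Qed.

Lemma mu_positions : t = 2 -> mu s t w (positions w pi) = pi.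
Proof.
move=> t2; have Om := positions_Omega t2.
apply: (eq_increasing_in (P := mem w)).
- apply: perm_trans (mu_perm w_sorted w_range Om) _.
  by case: Lambda_linear_ext; rewrite perm_sym.
- apply: (@eq_from_nth _ false) => [|q]; first by rewrite !size_map size_iota size_Lambda.
  rewrite size_map size_mu => qn; rewrite (nth_map 0) ?size_mu //.
  rewrite (nth_map 0) ?size_Lambda //.
  change ((nth 0 (mu s t w (positions w pi)) q \in w) = (nth 0 pi q \in w)).
  by rewrite mu_in_w // mem_positions ?size_Lambda.
- exact: mu_increasing_in_w.
- exact: Lambda_increasing_in_w.
- exact: mu_increasing_in_compl.
- exact: Lambda_increasing_in_compl.
Qed.

End Lambda.

Theorem theorem3 (s t : nat) (w : seq nat) :
  2 <= s -> 2 <= t ->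
  sorted ltn w -> all (fun x => s + 1 <= x <= s * t) w ->
  [/\ (forall I, Omega s t w I -> Lambda s t w (mu s t w I)),
      (forall I1 I2, Omega s t w I1 -> Omega s t w I2 ->
         mu s t w I1 = mu s t w I2 -> I1 = I2) &
      (t = 2 -> forall pi, Lambda s t w pi ->
         exists I, Omega s t w I /\ mu s t w I = pi)].
Proof.
move=> _ t_ge2 ws /allP wr; have w_range : {in w, forall x, s < x <= s * t}.
  by move=> x /wr; rewrite addn1.
split=> [I OmI | I1 I2 | t_eq2 pi piL].
- by apply: mu_Lambda; rewrite // (leq_trans _ t_ge2).
- exact: mu_inj.
- exists (positions w pi); split; first exact: positions_Omega.
  exact: mu_positions.
Qed.
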